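(* Let $2\le n<d$ with $n=2$ or $n$ odd, and let $t$ be as defined below. Then there exists $E\in\mathrm{SL}(d,q)$ such that $T:=E^{-1}tE$ is a weak doubling element.
   Context: Vectors are row vectors and matrices act from the right; $\mathrm{Fix}(g)=\{x\in\mathbb{F}_q^d: xg=x\}$. $e_1,\dots,e_d$ is the standard basis of $V=\mathbb{F}_q^d$, $V_n=\langle e_1,\dots,e_n\rangle$, $F_{d-n}=\langle e_{n+1},\dots,e_d\rangle$, and $n'=\min\{2n-1,d\}$. An element $c\in\mathrm{GL}(d,q)$ is a weak doubling element if (C1) $\dim(V_n+V_nc)=n'$ and (C2) if $n'<d$ then $\dim(F_{d-n}+\mathrm{Fix}(c))=d$. $E_{i,j}(\lambda)$ is the identity matrix with $(i,j)$ entry replaced by $\lambda$ ($i\ne j$). Here $q=p^f$. The element $t$ is: $E_{1,2}(1)$ if $n=2$; $\operatorname{diag}(z_1,I_{d-n})$ if $n>2$ and $p=2$; $\operatorname{diag}(z_2,I_{d-n})$ if $n>2$ and $p$ odd, where ($P_\sigma$ being the $n\times n$ matrix with $e_iP_\sigma=e_{\sigma(i)}$) $z_1=P_{(1,n,n-1,\dots,2)}$ with $(1,n)$ entry changed to $-1$ if $n$ is even, and $z_2=P_{(2,n,n-1,\dots,3)}$ with $(2,n)$ entry changed to $-1$ if $n$ is odd. *)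

From HB Require Import structures.
From mathcomp Require Import all_boot all_order all_algebra all_field.
Set Implicit Arguments. Unset Strict Implicit. Unset Printing Implicit Defensive.
Import GRing.Theory.
Local Open Scope ring_scope.

(* Indices are 0-based: the paper's e_k is row index k-1.
   Subspaces of F^d are represented (mxalgebra) by row spaces of matrices;
   vectors are rows, matrices act on the right. *)

(* V_n = <e_1..e_n> is the row space of pid_mx n; F_{d-n} = <e_{n+1}..e_d>
   is the row space of copid_mx n; Fix(c) = {x | x c = x} is kermx (c - 1). *)

Definition nprime (d n : nat) : nat := minn (2 * n - 1) d.

Definition weak_doubling (F : fieldType) (d n : nat) (c : 'M[F]_d) : Prop :=
  \rank ((pid_mx n : 'M[F]_d) + (pid_mx n : 'M[F]_d) *m c)%MS
               = nprime d n /\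
  ((nprime d n < d)%N ->
             \rank ((copid_mx n : 'M[F]_d) + kermx (c - 1%:M))%MS = d).

(* z_1 = P_sigma, sigma = (1,n,n-1,...,2) (1-based): sigma(1)=n, sigma(k)=k-1.
   0-based: 0 |-> n-1, k |-> k-1. Row i has its 1 in column sigma(i). *)
Definition zsig1 (n i : nat) : nat := if i == 0%N then n.-1 else i.-1.
(* z_2 = P_sigma, sigma = (2,n,n-1,...,3): sigma(1)=1, sigma(2)=n, sigma(k)=k-1.
   0-based: 0 |-> 0, 1 |-> n-1, k |-> k-1 (k >= 2). *)
Definition zsig2 (n i : nat) : nat :=
  if i == 0%N then 0%N else if i == 1%N then n.-1 else i.-1.

Definition z1_entry (F : fieldType) (n i j : nat) : F :=
  if j == zsig1 n i then
    (if [&& i == 0%N, j == n.-1 & ~~ odd n] then -1 else 1)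
  else 0.
Definition z2_entry (F : fieldType) (n i j : nat) : F :=
  if j == zsig2 n i then
    (if [&& i == 1%N, j == n.-1 & odd n] then -1 else 1)
  else 0.

Definition t_entry (F : fieldType) (n i j : nat) : F :=
  if n == 2%N then
    (if (i == 0%N) && (j == 1%N) then 1 else (i == j)%:R)
  else if (i < n)%N && (j < n)%N then
    (if 2%N \in [pchar F] then z1_entry F n i j else z2_entry F n i j)
  else (i == j)%:R.

Definition tmx (F : fieldType) (d n : nat) : 'M[F]_d :=
  \matrix_(i < d, j < d) t_entry F n i j.

(* Write d = n + m and t = diag(z, 1), where z - 1 has rank n - 1.  Put
   E = [[1, -phi], [0, 1]] [[1, 0], [C, 1]].  Then V_n E^-1 is the row space of
   [1 | phi], so (V_n + V_n T) E^-1 is spanned by the rows of [[1, phi], [z, phi]],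
   of rank n + rank ((z - 1) phi) by a Schur complement; phi can be chosen with
   rank ((z - 1) phi) = min (n - 1, m).  Since t fixes F_{d-n}, T fixes its image
   F_{d-n} E, the row space of [C | 1]; when 2n - 1 < d we have n <= m, so C can
   have rank n and F_{d-n} + F_{d-n} E is everything.
   For the top block z of t, z - 1 has a one-dimensional kernel: for n odd the
   permutation matrix z_1 has fixed vectors the constant ones, and for z_2 the
   sign -1 on an (n - 1)-cycle forces a fixed vector to vanish off e_1 when
   char F <> 2. *)

From HB Require Import structures.
From mathcomp Require Import all_boot all_order all_algebra all_field.
From mathcomp Require Import zify.
Set Implicit Arguments. Unset Strict Implicit. Unset Printing Implicit Defensive.
Import GRing.Theory.
Local Open Scope ring_scope.

Section BlockRank.
Variable F : fieldType.

Lemma mul_lower_unitriangular n m (A B : 'M[F]_(m, n)) :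
  block_mx 1%:M 0 A 1%:M *m block_mx 1%:M 0 B 1%:M
    = block_mx 1%:M 0 (A + B) 1%:M :> 'M_(n + m).
Proof. by rewrite mulmx_block !(mul0mx, mulmx0, mul1mx, mulmx1, addr0, add0r). Qed.

Lemma mul_upper_unitriangular n m (A B : 'M[F]_(n, m)) :
  block_mx 1%:M A 0 1%:M *m block_mx 1%:M B 0 1%:M
    = block_mx 1%:M (A + B) 0 1%:M :> 'M_(n + m).
Proof.
by rewrite mulmx_block !(mul0mx, mulmx0, mul1mx, mulmx1, addr0, add0r) [B + A]addrC.
Qed.

Lemma unitmx_lower_unitriangular n m (A : 'M[F]_(m, n)) :
  block_mx 1%:M 0 A 1%:M \in unitmx.
Proof. by rewrite unitmxE det_lblock !det1 mulr1 unitr1. Qed.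

Lemma unitmx_upper_unitriangular n m (A : 'M[F]_(n, m)) :
  block_mx 1%:M A 0 1%:M \in unitmx.
Proof. by rewrite unitmxE det_ublock !det1 mulr1 unitr1. Qed.

Lemma mxrank_block1 n p k (B : 'M[F]_(n, p)) (C : 'M_(k, n)) (D : 'M_(k, p)) :
  \rank (block_mx 1%:M B C D) = (n + \rank (D - C *m B)%R)%N.
Proof.
have -> : block_mx 1%:M B C D = block_mx 1%:M 0 C 1%:M *m
    block_mx 1%:M 0 0 (D - C *m B) *m block_mx 1%:M B 0 1%:M.
  by rewrite !mulmx_block !(mul0mx, mulmx0, mul1mx, mulmx1, addr0, add0r) subrKC.
rewrite mxrankMfree ?row_free_unit ?unitmx_upper_unitriangular //.
rewrite eqmxMfull ?row_full_unit ?unitmx_lower_unitriangular //.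
by rewrite rank_diag_block_mx mxrank1.
Qed.

Lemma eqmx_col_mx0 m1 m2 n (A : 'M[F]_(m1, n)) : (col_mx A (0 : 'M_(m2, n)) :=: A)%MS.
Proof. exact: eqmx_trans (eqmx_sym (addsmxE A 0)) (@addsmx0 F m1 m2 n A). Qed.

Lemma eqmx_col0mx m1 m2 n (A : 'M[F]_(m2, n)) : (col_mx (0 : 'M_(m1, n)) A :=: A)%MS.
Proof. exact: eqmx_trans (eqmx_sym (addsmxE 0 A)) (@adds0mx F m1 m2 n A). Qed.

Lemma eqmx_pid_row n m : ((pid_mx n : 'M[F]_(n + m)) :=: row_mx 1%:M 0)%MS.
Proof. by rewrite pid_mx_block block_mxEv row_mx0; apply: eqmx_col_mx0. Qed.

Lemma eqmx_copid_row n m : ((copid_mx n : 'M[F]_(n + m)) :=: row_mx 0 1%:M)%MS.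
Proof.
rewrite /copid_mx pid_mx_block (scalar_mx_block n m) opp_block_mx add_block_mx.
by rewrite subrr !oppr0 !addr0 block_mxEv row_mx0; apply: eqmx_col0mx.
Qed.

Lemma exists_mxrank_mul_min k n m (N : 'M[F]_(k, n)) :
  exists phi : 'M_(n, m), \rank (N *m phi) = minn (\rank N) m.
Proof.
exists (invmx (row_ebase N) *m pid_mx m).
rewrite mulmxA -{1}(mulmx_ebase N) mulmxK ?row_ebase_unit //.
rewrite -mulmxA mul_pid_mx eqmxMfull ?row_full_unit ?col_ebase_unit //.
by rewrite rank_pid_mx; have := rank_leq_row N; have := rank_leq_col N; lia.
Qed.

Lemma sub1mx_graph n m k (C : 'M[F]_(m, n)) (S : 'M_(k, n + m)) : row_full C ->
  (row_mx 0 1%:M <= S)%MS -> (row_mx C 1%:M <= S)%MS -> (1%:M <= S)%MS.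
Proof.
move=> /row_fullP[B BC1] sQS sGS.
have sCS : (row_mx C 0 <= S)%MS.
  have -> : row_mx C 0 = row_mx C 1%:M - row_mx 0 1%:M.
    by rewrite opp_row_mx add_row_mx oppr0 addr0 subrr.
  by rewrite addmx_sub // eqmx_opp.
have sVS : (row_mx 1%:M 0 <= S)%MS.
  have -> : (0 : 'M_(n, m)) = B *m 0 by rewrite mulmx0.
  rewrite -BC1 -mul_mx_row.
  exact: submx_trans (submxMl _ _) sCS.
by rewrite (scalar_mx_block n m) block_mxEv col_mx_sub sVS.
Qed.

Lemma mxrank_adds_conj k d (A : 'M[F]_(k, d)) (E t : 'M_d) : E \in unitmx ->
  \rank (A + A *m (invmx E *m t *m E))%MS
    = \rank (col_mx (A *m invmx E) (A *m invmx E *m t)).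
Proof.
move=> uE; have fE : row_free (invmx E) by rewrite row_free_unit unitmx_inv.
by rewrite addsmxE -(mxrankMfree _ fE) mul_col_mx !mulmxA mulmxK.
Qed.

Lemma sub_kermx_conj k d (A : 'M[F]_(k, d)) (E t : 'M_d) : E \in unitmx ->
  A *m t = A -> (A *m E <= kermx (invmx E *m t *m E - 1%:M))%MS.
Proof.
by move=> uE At; apply/sub_kermxP; rewrite mulmxBr mulmx1 !mulmxA mulmxK // At subrr.
Qed.

End BlockRank.

Lemma weak_doubling_conj_block (F : fieldType) n m (z : 'M[F]_n) :
  \rank (z - 1%:M) = n.-1 ->
  exists E : 'M[F]_(n + m), \det E = 1 /\
    weak_doubling n (invmx E *m block_mx z 0 0 1%:M *m E).
Proof.
move=> rank_z_sub1.
have [phi rank_phi] := exists_mxrank_mul_min m (z - 1%:M).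
set C : 'M[F]_(m, n) := pid_mx n.
set t := block_mx z 0 0 1%:M.
set E := block_mx 1%:M (- phi) 0 1%:M *m block_mx 1%:M 0 C 1%:M.
have uE : E \in unitmx.
  by rewrite unitmx_mul unitmx_upper_unitriangular unitmx_lower_unitriangular.
have invE : invmx E = block_mx 1%:M 0 (- C) 1%:M *m block_mx 1%:M phi 0 1%:M.
  set E' := _ *m _; suff E'E : E' *m E = 1%:M.
    by rewrite -[LHS]mul1mx -E'E -mulmxA mulmxV // mulmx1.
  rewrite mulmxA -(mulmxA _ _ (block_mx _ (- phi) _ _)) mul_upper_unitriangular.
  rewrite subrr -scalar_mx_block mulmx1 mul_lower_unitriangular addNr.
  by rewrite -scalar_mx_block.
exists E; split.
  by rewrite det_mulmx det_ublock det_lblock !det1 !mulr1.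
split => [|lt_n'_d].
- rewrite (adds_eqmx (eqmx_pid_row F n m) (eqmxMr _ (eqmx_pid_row F n m))).
  rewrite mxrank_adds_conj // invE.
  have -> : row_mx 1%:M 0 *m (block_mx 1%:M 0 (- C) 1%:M *m block_mx 1%:M phi 0 1%:M)
      = row_mx 1%:M phi.
    by rewrite mulmxA !mul_row_block !(mul0mx, mulmx0, mul1mx, mulmx1, addr0, add0r).
  rewrite mul_row_block !(mul0mx, mulmx0, mul1mx, mulmx1, addr0, add0r).
  rewrite -block_mxEv mxrank_block1.
  have -> : phi - z *m phi = - ((z - 1%:M) *m phi) by rewrite mulmxBl mul1mx opprB.
  by rewrite eqmx_opp rank_phi rank_z_sub1 /nprime; lia.
- have le_nm : (n <= m)%N by move: lt_n'_d; rewrite /nprime; lia.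
  apply/eqP; change (row_full (copid_mx n + kermx (invmx E *m t *m E - 1%:M))%MS).
  rewrite -sub1mx; apply: (sub1mx_graph (C := C)).
  + by rewrite /row_full rank_pid_mx.
  + by rewrite -(eqmx_copid_row F n m) addsmxSl.
  + apply: submx_trans (addsmxSr _ _).
    have -> : row_mx C 1%:M = row_mx 0 1%:M *m E.
      by rewrite mulmxA !mul_row_block !(mul0mx, mulmx0, mul1mx, mulmx1, addr0, add0r).
    apply: sub_kermx_conj => //.
    by rewrite mul_row_block !(mul0mx, mulmx0, mul1mx, mulmx1, addr0, add0r).
Qed.

Lemma eq_chain (T : Type) (f : nat -> T) a b :
  (forall k, (a < k < b)%N -> f k.-1 = f k) -> forall k, (a <= k < b)%N -> f k = f a.
Proof.
move=> step; elim=> [|k IH] /andP[le_ak lt_kb]; first by have -> : a = 0%N by lia.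
have [-> //|ne_ak] := eqVneq a k.+1.
by rewrite -step ?IH //; lia.
Qed.

Section FixedVectors.
Variable F : fieldType.

Lemma mxrank_kernel_line n (A : 'M[F]_n) (v : 'rV_n) :
  v != 0 -> v *m A = 0 -> (forall u : 'rV_n, u *m A = 0 -> (u <= v)%MS) ->
  \rank A = n.-1.
Proof.
move=> nz_v vA kerA.
have rank_ker : \rank (kermx A) = 1%N.
  have ker_v : (kermx A :=: v)%MS.
    apply/eqmxP/andP; split; last exact/sub_kermxP.
    by apply/row_subP => i; apply: kerA; rewrite -row_mul mulmx_ker row0.
  by rewrite ker_v rank_rV nz_v.
by move: rank_ker; rewrite mxrank_ker; have := rank_leq_row A; lia.
Qed.

Lemma mulmx_sub1_eq0 m n (u : 'M[F]_(m, n)) (A : 'M_n) :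
  (u *m (A - 1%:M) == 0) = (u *m A == u).
Proof. by rewrite mulmxBr mulmx1 subr_eq0. Qed.

Lemma mulmx_monomial_entry n (f : nat -> nat -> F) (s : nat -> nat)
    (u : 'rV[F]_n.+1) k :
  (forall i j, j != s i -> f i j = 0) ->
  (forall i, (i < n.+1)%N -> s i = s k -> i = k) ->
  (k < n.+1)%N -> (s k < n.+1)%N ->
  (u *m \matrix_(i < n.+1, j < n.+1) f i j) 0 (inord (s k)) =
    u 0 (inord k) * f k (s k).
Proof.
move=> f_off s_inj lt_kn lt_skn.
rewrite mxE (bigD1 (inord k)) //= big1 ?addr0; first by rewrite !mxE !inordK.
move=> i /eqP ne_ik; rewrite !mxE inordK // f_off ?mulr0 //.
apply/eqP => eq_s; apply: ne_ik; apply: val_inj; rewrite /= inordK //.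
exact: s_inj i (ltn_ord i) (esym eq_s).
Qed.

End FixedVectors.

Section TopBlock.
Variable F : fieldType.

Lemma tmx_block n m : tmx F (n + m) n = block_mx (tmx F n n) 0 0 1%:M.
Proof.
rewrite -[tmx _ _ _]submxK; congr block_mx; apply/matrixP => i j; rewrite !mxE /t_entry /=.
- by rewrite !ltn_ord.
- have lt_in := ltn_ord i.
  have -> : (n + j < n)%N = false by lia.
  have -> : (i == n + j :> nat) = false by apply/eqP; lia.
  rewrite andbF; case: eqP => [n2|_] //.
  have -> : (n + j == 1)%N = false by apply/eqP; lia.
  by rewrite andbF.
- have lt_jn := ltn_ord j.
  have -> : (n + i < n)%N = false by lia.
  have -> : (n + i == j :> nat) = false by apply/eqP; lia.
  case: eqP => [n2|_] //.
  by have -> : (n + i == 0)%N = false by apply/eqP; lia.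
- have -> : (n + i < n)%N = false by lia.
  rewrite eqn_add2l; case: eqP => [n2|_] //.
  by have -> : (n + i == 0)%N = false by apply/eqP; lia.
Qed.

Lemma rank_tmx2 : \rank (tmx F 2 2 - 1%:M) = 1%N.
Proof.
have -> : tmx F 2 2 - 1%:M = delta_mx 0 1.
  apply/matrixP => i j; rewrite !mxE /t_entry /=.
  by case: i => [[|[|?]] ?] //; case: j => [[|[|?]] ?] //=; rewrite ?subrr ?subr0.
exact: mxrank_delta.
Qed.

Lemma rank_tmx_pchar2 n : (2 <= n)%N -> odd n.+1 -> 2 \in [pchar F] ->
  \rank (tmx F n.+1 n.+1 - 1%:M) = n.
Proof.
move=> le2n odd_n ch2.
have -> : tmx F n.+1 n.+1 = \matrix_(i, j) z1_entry F n.+1 i j.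
  apply/matrixP => i j; rewrite !mxE /t_entry !ltn_ord ch2.
  by case: eqP => //; lia.
set Z := \matrix_(i, j) _.
have s_lt k : (k < n.+1)%N -> (zsig1 n.+1 k < n.+1)%N.
  by rewrite /zsig1; case: ifP; lia.
have Z_coord (u : 'rV_n.+1) k : (k < n.+1)%N ->
    (u *m Z) 0 (inord (zsig1 n.+1 k)) = u 0 (inord k).
  move=> lt_kn; rewrite mulmx_monomial_entry ?s_lt //.
  - by rewrite /z1_entry eqxx odd_n !andbF mulr1.
  - by move=> i j /negbTE; rewrite /z1_entry => ->.
  - by move=> i; rewrite /zsig1; do 2 case: ifP => /eqP; lia.
apply: (mxrank_kernel_line (v := const_mx 1)).
- by apply/eqP => /matrixP/(_ 0 0); rewrite !mxE; apply/eqP; apply: oner_neq0.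
- apply/eqP; rewrite mulmx_sub1_eq0; apply/eqP/matrixP => i j; rewrite (ord1 i).
  have [k lt_kn ->] : exists2 k, (k < n.+1)%N & j = inord (zsig1 n.+1 k).
    have lt_jn := ltn_ord j.
    case: (ltnP j.+1 n.+1) => lt_j1n; [exists j.+1 | exists 0%N] => //;
      by apply: val_inj; rewrite /= inordK /zsig1 //=; lia.
  by rewrite Z_coord // !mxE.
move=> u /eqP; rewrite mulmx_sub1_eq0 => /eqP uZ.
have step k : (0 < k < n.+1)%N -> u 0 (inord k.-1) = u 0 (inord k).
  case/andP=> k_gt0 lt_kn; rewrite -[RHS](Z_coord u k lt_kn) uZ /zsig1.
  by have -> : (k == 0)%N = false by lia.
have u_const := eq_chain (f := fun k => u 0 (inord k)) step.
apply/sub_rVP; exists (u 0 0); apply/matrixP => i j; rewrite !mxE (ord1 i) mulr1.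
rewrite -[j]inord_val u_const ?ltn_ord //.
by congr (u _ _); apply: val_inj; rewrite /= inordK.
Qed.

Lemma rank_tmx_npchar2 n : (2 <= n)%N -> odd n.+1 -> 2 \notin [pchar F] ->
  \rank (tmx F n.+1 n.+1 - 1%:M) = n.
Proof.
move=> le2n odd_n ch2.
have -> : tmx F n.+1 n.+1 = \matrix_(i, j) z2_entry F n.+1 i j.
  apply/matrixP => i j; rewrite !mxE /t_entry !ltn_ord (negbTE ch2).
  by case: eqP => //; lia.
set Z := \matrix_(i, j) _.
have Z_coord (u : 'rV_n.+1) k : (k < n.+1)%N ->
    (u *m Z) 0 (inord (zsig2 n.+1 k)) = u 0 (inord k) * z2_entry F n.+1 k (zsig2 n.+1 k).
  move=> lt_kn; rewrite mulmx_monomial_entry //.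
  - by move=> i j /negbTE; rewrite /z2_entry => ->.
  - move=> i; rewrite /zsig2.
    by case: ifP => /eqP ? ; case: ifP => /eqP ?; try case: ifP => /eqP ?;
      try case: ifP => /eqP ?; lia.
  - by rewrite /zsig2; case: ifP => _ //; case: ifP => _; lia.
apply: (mxrank_kernel_line (v := delta_mx 0 0)).
- by apply/eqP => /matrixP/(_ 0 0); rewrite !mxE eqxx; apply/eqP; apply: oner_neq0.
- apply/eqP; rewrite mulmx_sub1_eq0 -rowE; apply/eqP/matrixP => i j.
  by rewrite !mxE /z2_entry /zsig2 (ord1 i); case: j => [[|j] ?].
move=> u /eqP; rewrite mulmx_sub1_eq0 => /eqP uZ.
have step k : (1 < k < n.+1)%N -> u 0 (inord k.-1) = u 0 (inord k).
  case/andP=> lt1k lt_kn; have := Z_coord u k lt_kn; rewrite uZ /z2_entry /zsig2.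
  have -> : (k == 0)%N = false by lia.
  have -> : (k == 1)%N = false by lia.
  by rewrite eqxx mulr1.
have u_const := eq_chain (f := fun k => u 0 (inord k)) step.
have u_n : u 0 (inord n) = - u 0 (inord 1).
  have := Z_coord u 1%N (ltn_trans le2n (ltnSn n)); rewrite uZ /z2_entry /zsig2 /= eqxx /=.
  by rewrite (negbTE (_ : ~~ odd n)) // mulrN1.
have u_1 : u 0 (inord 1) = 0.
  have /eqP : u 0 (inord 1) *+ 2 = 0.
    by rewrite mulr2n -{1}(u_const n) ?u_n ?addNr //; lia.
  have nz2 : (2%:R : F) != 0 by move: ch2; rewrite inE.
  by rewrite -mulr_natr mulf_eq0 (negbTE nz2) orbF => /eqP.
apply/sub_rVP; exists (u 0 0); apply/matrixP => i j; rewrite !mxE (ord1 i) eqxx.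
have [j0 | j_gt0] := posnP j.
  by rewrite (_ : j = 0) ?mulr1 //; apply: val_inj.
have -> : (j == 0) = false by apply/eqP => j0; rewrite j0 in j_gt0.
by rewrite mulr0 -[j]inord_val u_const ?u_1 // j_gt0 ltn_ord.
Qed.

Lemma rank_tmx n : (2 <= n)%N -> (n = 2%N \/ odd n) ->
  \rank (tmx F n n - 1%:M) = n.-1.
Proof.
move=> le2n [->|]; first exact: rank_tmx2.
case: n le2n => [//|n] le2n odd_n.
have {le2n} le2n : (2 <= n)%N by move: odd_n le2n; case: n => [|[|]].
have [ch2|ch2] := boolP (2 \in [pchar F]).
  exact: rank_tmx_pchar2.
exact: rank_tmx_npchar2.
Qed.

End TopBlock.

Theorem lemma7p7 (F : finFieldType) (d n : nat) :
  (2 <= n)%N -> (n < d)%N -> (n = 2%N \/ odd n) ->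
  exists E : 'M[F]_d, \det E = 1 /\
    weak_doubling n (invmx E *m tmx F d n *m E).
Proof.
move=> le2n lt_nd n2_or_odd.
have [m ->] : exists m, d = (n + m)%N by exists (d - n)%N; rewrite subnKC // ltnW.
rewrite tmx_block; apply: weak_doubling_conj_block; exact: rank_tmx le2n n2_or_odd.
Qed.
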